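(* Consider the two first-order partial differential equations, depending on a small parameter $\epsilon>0$, for positive unknowns $v(x,s)$ and $u(x,s)$: $$v_s+\frac{\epsilon}{2}vv_x-\frac12 v^2=0,\qquad 2u_s+\frac{\epsilon}{2}u(u_s+u_x)=0 .$$ Then both equations belong to $\mathbf{PDE}_2^{\infty}$ and are approximable in the class $(M,c,L,k,D)=(20,2,1,2,1)$, and they are mutually related in $\sim_{\infty}^{e^e}$ in the class $(M,c,D,L;\alpha)=(40,4,1,2;1)$.
   Context: Approximation by discrete dynamics. Let $f=k/h$ be a rational function of $n$ variables ($k,h$ polynomials). An evolutional discrete dynamics is a recursion $z_{N+1}^{t+1}=f(z_{N-l_0}^{t+1},\dots,z_N^{t+1},z_{N-l_1}^t,\dots,z_{N+k_1}^t,\dots,z_{N-l_{d+1}}^{t-d},\dots,z_{N+k_{d+1}}^{t-d})$ with integers $l_i,k_j\ge 0$, $d\ge0$; it is consistent if $k_1,\dots,k_{d+1}\le 1$. Approximation data consist of this choice of arguments together with integers $(m,p,q)$. One substitutes $z_N^t=\epsilon^m u(x,s)$, $x=\epsilon^pN$, $s=\epsilon^q t$ for a positive $C^{\alpha+1}$ function $u$, expands each shifted value $u(x+i\epsilon^p,s+j\epsilon^q)$ by Taylor's formula up to order $\alpha$ with remainder given by the $(\alpha+1)$-th order derivatives at intermediate points $\xi_{ij}$, writes $z_{N+1}^{t+1}-f(\cdots)$ as a fraction with denominator $h(\epsilon^m u(x-l_0\epsilon^p,s+\epsilon^q),\dots)$, and splits the numerator as $\epsilon^m P(\epsilon,u,u_x,u_s,\dots,u_{\alpha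 s})+\epsilon^{m+1}Q(\dots)$, where $P$ collects the monomials containing only derivatives of order $\le\alpha$ and every monomial of $Q$ contains an $(\alpha+1)$-th order derivative at an intermediate point. Put $\mathbf F=P/h$, $\mathbf F^1=Q/h$, so $z_{N+1}^{t+1}-f(\cdots)=\epsilon^m\mathbf F+\epsilon^{m+1}\mathbf F^1$. A PDE $P(\epsilon,u,\dots,u_{\alpha s})=0$ of order $\alpha$ is in $\mathbf{PDE}_2^{\infty}$ if it arises this way with $h>0$ and there is a constant $C\ge0$ with $|\mathbf F^1|\le C(|u_{(\alpha+1)x}(\xi_{\alpha+1,0})|+\dots+|u_{(\alpha+1)s}(\xi_{0,\alpha+1})|)$ pointwise; it is in $\mathbf{PDE}_2^{fin}$ if moreover the dynamics is consistent. From the data set $l=\max(l_0,\dots,l_{d+1})$, $L=\max(l,d)$, $D=\max(p,q)$, $k=\max(k_1,\dots,k_{d+1})$. Tropical constants. A relatively elementary function is $f_t(\bar z)=\sum_{k=1}^m t^{\alpha_k}\bar z^{\bar a_k}/\sum_{k=1}^{l'} t^{\beta_k}\bar z^{\bar b_k}$ ($\bar z\in\mathbb R^n_{>0}$, $\bar a_k,\bar b_k\in\mathbb Z^n$, $\alpha_k,\beta_k\in\mathbb R$); its $(\max,+)$-function is $\varphi(\bar x)=\max_k(\alpha_k+\bar a_k\cdot\bar x)-\max_k(\beta_k+\bar b_k\cdot\bar x)$. $M_f=ml'$ is the number of components and $c_f\ge1$ the Lipschitz constant of $\varphi$. A PDE in $\mathbf{PDE}_2^*$ is approximable in the class $(M,c,L,k,D)$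 if it is induced from some such dynamics with relatively elementary $f$ and approximation data whose constants $M_f,c_f,L,k,D$ are respectively $\le M,c,L,k,D$. Relatedness. For positive $u,v:(0,A_0)\times[0,T_0)\to(0,\infty)$, $A_0,T_0\in(0,\infty]$, and $0<\epsilon<1$, the initial rate is $[u:v]_\epsilon=\sup\max(u/v,v/u)$ over $(x,s)\in(0,A_0)\times[0,\epsilon]\cup(0,\epsilon]\times[0,T_0)$. For $u\in C^{\alpha+1}$, $\|u\|_{\alpha+1}$ is the maximum over all $(\alpha+1)$-fold partial derivatives (each in $\partial_x$ or $\partial_s$) of their sup norms on the domain, and $K_{\alpha+1}(u)=\|u\|_{\alpha+1}/\inf u$. For $*\in\{fin,\infty\}$, solutions are taken on domains $(0,A_0)\times[0,T_0)$ with $A_0,T_0\in(0,\infty]$ ($A_0=\infty$ if $*=\infty$). Two PDEs $P,Q$ of order $\alpha$ are related in $\sim_*^{e^e}$ in the class $(M,c,D,L;\alpha)$ ($M,c,D,L\ge1$) if there are constants $C,C'$ such that for every such domain, every $\epsilon$ and every pair of positive $C^{\alpha+1}$ solutions $u$ of $P$ and $v$ of $Q$ (with parameter $\epsilon$), if $0<L\epsilon\le\min(\frac{1}{CK},A_0,T_0,C')$ with $K=\max(K_{\alpha+1}(u),K_{\alpha+1}(v))$, then for all $(x,s)$ in the domain $\max(u/v,v/u)(x,s)\le M^{c^{\epsilon^{-D}(x+s+1)}}([u:v]_{L\epsilon})^{c^{\epsilon^{-D}(x+s+1)}}$. *)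

(* concrete reals R. All definitions are specialised to
   first-order PDEs (alpha = 1), which is the only case the statement uses. *)
From Stdlib Require Import Reals Lra ZArith List.
Import ListNotations.
Open Scope R_scope.

Definition poly := list (R * list nat).
Fixpoint mon (e : list nat) (z : list R) : R :=
  match e, z with
  | e0 :: e', z0 :: z' => z0 ^ e0 * mon e' z'
  | _, _ => 1
  end.
Definition peval (P : poly) (z : list R) : R :=
  fold_right (fun c acc => fst c * mon (snd c) z + acc) 0 P.

(* z_{N+1}^{t+1} = f(z_{N-l0}^{t+1},..,z_N^{t+1}, z_{N-l_1}^t,..,z_{N+k_1}^t, ...,
                     z_{N-l_{d+1}}^{t-d},..,z_{N+k_{d+1}}^{t-d}),  f = k/h;
   only the values ls i, ks i for 1 <= i <= d+1 matter. *)
Record dyn := Dyn {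
  dl0 : nat; dd : nat; dls : nat -> nat; dks : nat -> nat;
  dk : poly; dh : poly;
  dm : Z; dp : Z; dq : Z
}.

(* the arguments of f, as (space shift, time shift) relative to (N,t) *)
Definition stencil (D : dyn) : list (Z * Z) :=
  map (fun a => (- Z.of_nat (dl0 D - a), 1)%Z) (seq 0%nat (S (dl0 D))) ++
  flat_map (fun i => map (fun b => (Z.of_nat b - Z.of_nat (dls D i), 1 - Z.of_nat i)%Z)
                         (seq 0%nat (dls D i + dks D i + 1)%nat))
           (seq 1%nat (S (dd D))).
Definition nargs (D : dyn) : nat := length (stencil D).

Definition lmax (D : dyn) : nat :=
  fold_right Nat.max (dl0 D) (map (dls D) (seq 1%nat (S (dd D)))).
Definition Lconst (D : dyn) : nat := Nat.max (lmax D) (dd D).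
Definition kconst (D : dyn) : nat := fold_right Nat.max 0%nat (map (dks D) (seq 1%nat (S (dd D)))).
Definition Dconst (D : dyn) : Z := Z.max (dp D) (dq D).

(* first-order Taylor polynomial of u(x + i eps^p, s + j eps^q) *)
Definition tay (D : dyn) (eps u0 ux us : R) (ij : Z * Z) : R :=
  u0 + IZR (fst ij) * powerRZ eps (dp D) * ux + IZR (snd ij) * powerRZ eps (dq D) * us.

(* the induced PDE P(eps,u,u_x,u_s): the part of the numerator
   z_{N+1}^{t+1} h(..) - k(..) made of monomials containing only derivatives
   of order <= 1, divided by eps^m *)
Definition induced_P (D : dyn) (eps u0 ux us : R) : R :=
  let em := powerRZ eps (dm D) in
  let zs := map (fun ij => em * tay D eps u0 ux us ij) (stencil D) in
  (em * tay D eps u0 ux us (1, 1)%Z * peval (dh D) zs - peval (dk D) zs) / em.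

Definition shx (D : dyn) (eps : R) (ij : Z * Z) : R := IZR (fst ij) * powerRZ eps (dp D).
Definition shs (D : dyn) (eps : R) (ij : Z * Z) : R := IZR (snd ij) * powerRZ eps (dq D).

(* F^1 = Q / h, where numerator = eps^m P + eps^(m+1) Q *)
Definition F1 (D : dyn) (eps : R) (u ux us : R -> R -> R) (x s : R) : R :=
  let em := powerRZ eps (dm D) in
  let zs := map (fun ij => em * u (x + shx D eps ij) (s + shs D eps ij)) (stencil D) in
  (em * u (x + shx D eps (1, 1)%Z) (s + shs D eps (1, 1)%Z) * peval (dh D) zs
     - peval (dk D) zs - em * induced_P D eps (u x s) (ux x s) (us x s))
  / (powerRZ eps (dm D + 1) * peval (dh D) zs).

Definition pderx (Dom : R -> R -> Prop) (f g : R -> R -> R) : Prop :=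
  forall x s, Dom x s -> forall e, 0 < e -> exists del, 0 < del /\
    forall h, h <> 0 -> Rabs h < del -> Dom (x + h) s ->
      Rabs ((f (x + h) s - f x s) / h - g x s) < e.
Definition pders (Dom : R -> R -> Prop) (f g : R -> R -> R) : Prop :=
  forall x s, Dom x s -> forall e, 0 < e -> exists del, 0 < del /\
    forall h, h <> 0 -> Rabs h < del -> Dom x (s + h) ->
      Rabs ((f x (s + h) - f x s) / h - g x s) < e.
Definition cont_on (Dom : R -> R -> Prop) (f : R -> R -> R) : Prop :=
  forall x s, Dom x s -> forall e, 0 < e -> exists del, 0 < del /\
    forall y r, Dom y r -> Rabs (y - x) < del -> Rabs (r - s) < del ->
      Rabs (f y r - f x s) < e.
Definition C2_on (Dom : R -> R -> Prop) (u ux us uxx uxs usx uss : R -> R -> R) : Prop :=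
  pderx Dom u ux /\ pders Dom u us /\
  pderx Dom ux uxx /\ pders Dom ux uxs /\ pderx Dom us usx /\ pders Dom us uss /\
  cont_on Dom u /\ cont_on Dom ux /\ cont_on Dom us /\
  cont_on Dom uxx /\ cont_on Dom uxs /\ cont_on Dom usx /\ cont_on Dom uss.

Definition whole (x s : R) : Prop := True.

Definition sum2 (D : dyn) (eps : R) (uxx uxs usx uss : R -> R -> R) (x s : R)
  (th : Z * Z -> R) : R :=
  fold_right (fun ij acc =>
     let xi := x + th ij * shx D eps ij in let si := s + th ij * shs D eps ij in
     Rabs (uxx xi si) + Rabs (uxs xi si) + Rabs (usx xi si) + Rabs (uss xi si) + acc)
   0 ((1, 1)%Z :: stencil D).

(* A first-order PDE is a function G eps u u_x u_s; the equation is G = 0. *)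
Definition pde1 := R -> R -> R -> R -> R.

Definition PDE2inf_data (D : dyn) (G : pde1) : Prop :=
  (forall z, length z = nargs D -> Forall (fun y => 0 < y) z -> 0 < peval (dh D) z) /\
  (exists lam : R -> R, forall eps, 0 < eps < 1 -> lam eps <> 0 /\
     forall u0 ux us, 0 < u0 -> induced_P D eps u0 ux us = lam eps * G eps u0 ux us) /\
  (exists C, 0 <= C /\
     forall eps, 0 < eps < 1 ->
     forall u ux us uxx uxs usx uss,
       C2_on whole u ux us uxx uxs usx uss -> (forall x s, 0 < u x s) ->
     forall x s (th : Z * Z -> R),
       (forall ij, In ij ((1, 1)%Z :: stencil D) ->
          0 <= th ij <= 1 /\
          let a := shx D eps ij in let b := shs D eps ij in
          let xi := x + th ij * a in let si := s + th ij * b in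
          u (x + a) (s + b) = u x s + a * ux x s + b * us x s
             + / 2 * (a ^ 2 * uxx xi si + a * b * (uxs xi si + usx xi si) + b ^ 2 * uss xi si)) ->
       Rabs (F1 D eps u ux us x s) <= C * sum2 D eps uxx uxs usx uss x s th).

Definition PDE2inf (G : pde1) : Prop := exists D, PDE2inf_data D G.

Fixpoint lmon (a : list Z) (z : list R) : R :=
  match a, z with
  | a0 :: a', z0 :: z' => powerRZ z0 a0 * lmon a' z'
  | _, _ => 1
  end.
Definition relsum (t : R) (T : list (R * list Z)) (z : list R) : R :=
  fold_right (fun c acc => Rpower t (fst c) * lmon (snd c) z + acc) 0 T.
Fixpoint dotZ (a : list Z) (x : list R) : R :=
  match a, x with
  | a0 :: a', x0 :: x' => IZR a0 * x0 + dotZ a' x'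
  | _, _ => 0
  end.
Definition tropmax (T : list (R * list Z)) (x : list R) : R :=
  match T with
  | [] => 0
  | c :: T' => fold_right (fun c' acc => Rmax (fst c' + dotZ (snd c') x) acc)
                          (fst c + dotZ (snd c) x) T'
  end.
Definition phi (num den : list (R * list Z)) (x : list R) : R :=
  tropmax num x - tropmax den x.
Definition supdist (x y : list R) : R :=
  fold_right Rmax 0 (map (fun p => Rabs (fst p - snd p)) (combine x y)).

Definition approx_data (D : dyn) (M c : R) (L0 k0 D0 : nat) : Prop :=
  exists (t : R) (num den : list (R * list Z)),
    0 < t /\ num <> [] /\ den <> [] /\
    Forall (fun cc => length (snd cc) = nargs D) num /\
    Forall (fun cc => length (snd cc) = nargs D) den /\
    (forall z, length z = nargs D -> Forall (fun y => 0 < y) z ->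
       peval (dk D) z / peval (dh D) z = relsum t num z / relsum t den z) /\
    INR (length num * length den) <= M /\
    (forall x y, length x = nargs D -> length y = nargs D ->
       Rabs (phi num den x - phi num den y) <= c * supdist x y) /\
    (Lconst D <= L0)%nat /\ (kconst D <= k0)%nat /\ (Dconst D <= Z.of_nat D0)%Z.

Definition approximable (G : pde1) (M c : R) (L0 k0 D0 : nat) : Prop :=
  exists D, PDE2inf_data D G /\ approx_data D M c L0 k0 D0.

(* domain (0,infty) x [0,T0), T0 in (0,infty] (None = infinity) *)
Definition dom (T0 : option R) (x s : R) : Prop :=
  0 < x /\ 0 <= s /\ match T0 with Some T => s < T | None => True end.
Definition T0_ok (T0 : option R) : Prop :=
  match T0 with Some T => 0 < T | None => True end.
Definition le_T0 (a : R) (T0 : option R) : Prop :=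
  match T0 with Some T => a <= T | None => True end.
Definition solves (G : pde1) (eps : R) (Dom : R -> R -> Prop) (u ux us : R -> R -> R) : Prop :=
  forall x s, Dom x s -> G eps (u x s) (ux x s) (us x s) = 0.
Definition ratio (u v : R -> R -> R) (x s : R) : R := Rmax (u x s / v x s) (v x s / u x s).
Definition max2nd (uxx uxs usx uss : R -> R -> R) (x s : R) : R :=
  Rmax (Rmax (Rabs (uxx x s)) (Rabs (uxs x s))) (Rmax (Rabs (usx x s)) (Rabs (uss x s))).

Definition related_inf (P Q : pde1) (M c : R) (D0 L0 : nat) : Prop :=
  exists C C', 0 < C /\ 0 < C' /\
  forall T0, T0_ok T0 ->
  forall eps, 0 < eps < 1 ->
  forall u ux us uxx uxs usx uss v vx vs vxx vxs vsx vss,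
    C2_on (dom T0) u ux us uxx uxs usx uss ->
    C2_on (dom T0) v vx vs vxx vxs vsx vss ->
    (forall x s, dom T0 x s -> 0 < u x s) ->
    (forall x s, dom T0 x s -> 0 < v x s) ->
    solves P eps (dom T0) u ux us -> solves Q eps (dom T0) v vx vs ->
    (* 0 < L eps <= min(1/(C K), A0 = infty, T0, C') *)
    INR L0 * eps <= C' -> le_T0 (INR L0 * eps) T0 ->
    (forall x s y r, dom T0 x s -> dom T0 y r ->
        C * (INR L0 * eps) * max2nd uxx uxs usx uss x s <= u y r /\
        C * (INR L0 * eps) * max2nd vxx vxs vsx vss x s <= v y r) ->
    (* R0 is any upper bound of the initial rate region, i.e. R0 >= [u:v]_{L eps} *)
    forall R0,
    (forall x s, dom T0 x s -> (s <= INR L0 * eps \/ x <= INR L0 * eps) -> ratio u v x s <= R0) ->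
    forall x s, dom T0 x s ->
      ratio u v x s <=
        Rpower M (Rpower c ((x + s + 1) / eps ^ D0)) *
        Rpower R0 (Rpower c ((x + s + 1) / eps ^ D0)).

Definition Gv : pde1 := fun eps v vx vs => vs + eps / 2 * v * vx - / 2 * v ^ 2.
Definition Gu : pde1 := fun eps u ux us => 2 * us + eps / 2 * u * (us + ux).

From Pilot Require Import Defs.
From Stdlib Require Import Reals Lra List ZArith.
Import ListNotations.
Open Scope R_scope.

(* Both equations come from the three-point scheme
   z_{N+1}^{t+1} = f(z_N^{t+1}, z_N^t, z_{N+1}^t) with (m,p,q) = (1,1,1).  Substituting
   Taylor expansions, the order-eps part of the numerator is eps G, and the rest is a
   combination of the second-order Taylor remainders whose coefficients are dominated by
   the positive denominator; this bounds F^1.  Both f are quotients of positive sums of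
   monomials whose tropicalizations at t = 2 are 2-Lipschitz.

   For relatedness, once the second derivatives are small compared with the solution
   (this is what C = 5, L = 2 buy), the grid values of each solution satisfy an implicit
   two-level relation up to a factor 2.  Comparing the two relations, the ratio
   max(u/v, v/u) at a grid point is at most 16 rho^3 if it is at most rho at its three
   predecessors; starting from the initial strip, where it is at most R0, this gives the
   bound (40 R0)^(4^((x+s+1)/eps)). *)

Lemma Rabs_lincomb3_le a1 a2 a3 r1 r2 r3 :
  Rabs (a1 * r1 + a2 * r2 + a3 * r3) <=
  Rabs a1 * Rabs r1 + Rabs a2 * Rabs r2 + Rabs a3 * Rabs r3.
Proof.
  rewrite <- !Rabs_mult.
  pose proof (Rabs_triang (a1 * r1 + a2 * r2) (a3 * r3)).
  pose proof (Rabs_triang (a1 * r1) (a2 * r2)).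
  lra.
Qed.

Lemma Rabs_weighted_residuals_le eps h a1 a2 a3 r1 r2 r3 S1 S2 S3 :
  0 < eps < 1 -> 0 < h -> Rabs a1 <= h -> Rabs a2 <= h -> Rabs a3 <= h ->
  Rabs r1 <= eps ^ 2 / 2 * S1 -> Rabs r2 <= eps ^ 2 / 2 * S2 ->
  Rabs r3 <= eps ^ 2 / 2 * S3 ->
  Rabs ((a1 * r1 + a2 * r2 + a3 * r3) / (eps * h)) <= S1 + S2 + S3.
Proof.
  intros Heps Hh Ha1 Ha2 Ha3 Hr1 Hr2 Hr3.
  assert (Heps2 : eps ^ 2 / 2 <= eps) by (simpl; nra).
  assert (Hcomb : Rabs (a1 * r1 + a2 * r2 + a3 * r3) <= h * (eps ^ 2 / 2 * (S1 + S2 + S3))).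
  { eapply Rle_trans; [apply Rabs_lincomb3_le|].
    pose proof (Rabs_pos r1); pose proof (Rabs_pos r2); pose proof (Rabs_pos r3).
    assert (Rabs a1 * Rabs r1 <= h * Rabs r1) by (apply Rmult_le_compat_r; lra).
    assert (Rabs a2 * Rabs r2 <= h * Rabs r2) by (apply Rmult_le_compat_r; lra).
    assert (Rabs a3 * Rabs r3 <= h * Rabs r3) by (apply Rmult_le_compat_r; lra).
    nra. }
  assert (HS : 0 <= S1 + S2 + S3).
  { pose proof (Rabs_pos r1); pose proof (Rabs_pos r2); pose proof (Rabs_pos r3).
    assert (0 < eps ^ 2 / 2) by (simpl; nra). nra. }
  unfold Rdiv; rewrite Rabs_mult, Rabs_inv, (Rabs_pos_eq (eps * h)) by nra.
  apply (Rmult_le_reg_r (eps * h)); [nra|].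
  rewrite Rmult_assoc, Rinv_l, Rmult_1_r by nra.
  assert (h * (eps ^ 2 / 2) * (S1 + S2 + S3) <= h * eps * (S1 + S2 + S3)).
  { apply Rmult_le_compat_r; [exact HS|]. apply Rmult_le_compat_l; lra. }
  nra.
Qed.

Lemma taylor2_remainder_le (U u0 a b p q A B C D e : R) :
  U = u0 + a * p + b * q + / 2 * (a ^ 2 * A + a * b * (B + C) + b ^ 2 * D) ->
  Rabs a <= e -> Rabs b <= e ->
  Rabs (U - (u0 + a * p + b * q)) <= e ^ 2 / 2 * (Rabs A + Rabs B + Rabs C + Rabs D).
Proof.
  intros -> Ha Hb.
  replace (u0 + a * p + b * q + / 2 * (a ^ 2 * A + a * b * (B + C) + b ^ 2 * D)
           - (u0 + a * p + b * q))
    with (/ 2 * ((a ^ 2 * A + a * b * B) + (a * b * C + b ^ 2 * D))) by ring.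
  assert (He : 0 <= e) by (eapply Rle_trans; [apply Rabs_pos|exact Ha]).
  assert (Hab : Rabs (a * b) <= e ^ 2).
  { rewrite Rabs_mult; simpl; rewrite Rmult_1_r.
    apply Rmult_le_compat; auto using Rabs_pos. }
  assert (Ha2 : Rabs (a ^ 2) <= e ^ 2).
  { rewrite <- RPow_abs; apply pow_incr; split; [apply Rabs_pos|exact Ha]. }
  assert (Hb2 : Rabs (b ^ 2) <= e ^ 2).
  { rewrite <- RPow_abs; apply pow_incr; split; [apply Rabs_pos|exact Hb]. }
  assert (Hcoef : forall c X, Rabs c <= e ^ 2 -> Rabs (c * X) <= e ^ 2 * Rabs X).
  { intros c X Hc; rewrite Rabs_mult; apply Rmult_le_compat_r; auto using Rabs_pos. }
  rewrite Rabs_mult, (Rabs_pos_eq (/ 2)) by lra.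
  pose proof (Rabs_triang (a ^ 2 * A + a * b * B) (a * b * C + b ^ 2 * D)).
  pose proof (Rabs_triang (a ^ 2 * A) (a * b * B)).
  pose proof (Rabs_triang (a * b * C) (b ^ 2 * D)).
  pose proof (Hcoef _ A Ha2); pose proof (Hcoef _ B Hab);
  pose proof (Hcoef _ C Hab); pose proof (Hcoef _ D Hb2).
  lra.
Qed.

(* The scheme z_{N+1}^{t+1} = k/h (z_N^{t+1}, z_N^t, z_{N+1}^t) with data (m,p,q) = (1,1,1). *)
Definition dyn3 (k h : Defs.poly) : dyn := Dyn 0 0 (fun _ => 0%nat) (fun _ => 1%nat) k h 1 1 1.

Lemma stencil_dyn3 k h : stencil (dyn3 k h) = [(0, 1); (0, 0); (1, 0)]%Z.
Proof. reflexivity. Qed.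

Lemma nargs_dyn3 k h : nargs (dyn3 k h) = 3%nat.
Proof. reflexivity. Qed.

Definition F1_grid (k h : Defs.poly) (eps u0 ux us u11 u01 u10 : R) : R :=
  let zs := [eps * u01; eps * u0; eps * u10] in
  (eps * u11 * peval h zs - peval k zs - eps * induced_P (dyn3 k h) eps u0 ux us)
  / (eps ^ 2 * peval h zs).

Lemma F1_dyn3 k h eps u ux us x s :
  F1 (dyn3 k h) eps u ux us x s =
  F1_grid k h eps (u x s) (ux x s) (us x s)
    (u (x + eps) (s + eps)) (u x (s + eps)) (u (x + eps) s).
Proof.
  unfold F1, F1_grid, shx, shs; rewrite stencil_dyn3; simpl.
  rewrite ?Rmult_1_r, ?Rmult_0_l, ?Rmult_1_l, ?Rplus_0_r.
  reflexivity.
Qed.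

Lemma shx_dyn3 k h eps i j : shx (dyn3 k h) eps (i, j) = IZR i * eps.
Proof. unfold shx; simpl; ring. Qed.

Lemma shs_dyn3 k h eps i j : shs (dyn3 k h) eps (i, j) = IZR j * eps.
Proof. unfold shs; simpl; ring. Qed.

Lemma positive_triple (z : list R) : length z = 3%nat -> Forall (fun y => 0 < y) z ->
  exists a b c, z = [a; b; c] /\ 0 < a /\ 0 < b /\ 0 < c.
Proof.
  intros Hlen Hpos; destruct z as [|a [|b [|c [|]]]]; try discriminate.
  inversion Hpos as [|? ? Ha Hpos1]; inversion Hpos1 as [|? ? Hb Hpos2];
    inversion Hpos2 as [|? ? Hc _].
  exists a, b, c; auto.
Qed.

Lemma shift_dyn3_le k h eps ij : 0 < eps -> In ij ((1, 1)%Z :: stencil (dyn3 k h)) ->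
  Rabs (shx (dyn3 k h) eps ij) <= eps /\ Rabs (shs (dyn3 k h) eps ij) <= eps.
Proof.
  intros Heps Hin; rewrite stencil_dyn3 in Hin.
  destruct Hin as [<-|[<-|[<-|[<-|[]]]]]; rewrite shx_dyn3, shs_dyn3; simpl IZR;
    rewrite ?Rmult_0_l, ?Rmult_1_l, ?Rabs_R0, ?(Rabs_pos_eq eps); lra.
Qed.

Section F1Estimate.

Variables (k h : Defs.poly) (eps : R) (u ux us uxx uxs usx uss : R -> R -> R) (x s : R)
  (th : Z * Z -> R).
Let D := dyn3 k h.
Hypotheses (Heps : 0 < eps < 1) (Hpos : 0 < u x s).
Hypothesis Hth : forall ij, In ij ((1, 1)%Z :: stencil D) ->
  let a := shx D eps ij in let b := shs D eps ij in
  let xi := x + th ij * a in let si := s + th ij * b in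
  u (x + a) (s + b) = u x s + a * ux x s + b * us x s
     + / 2 * (a ^ 2 * uxx xi si + a * b * (uxs xi si + usx xi si) + b ^ 2 * uss xi si).
Hypothesis HF1 : forall eps u0 ux us r11 r01 r10 S11 S01 S10, 0 < eps < 1 -> 0 < u0 ->
  Rabs r11 <= eps ^ 2 / 2 * S11 -> Rabs r01 <= eps ^ 2 / 2 * S01 ->
  Rabs r10 <= eps ^ 2 / 2 * S10 ->
  Rabs (F1_grid k h eps u0 ux us (u0 + eps * ux + eps * us + r11)
          (u0 + eps * us + r01) (u0 + eps * ux + r10)) <= S11 + S01 + S10.

Let S ij := let xi := x + th ij * shx D eps ij in let si := s + th ij * shs D eps ij in
  Rabs (uxx xi si) + Rabs (uxs xi si) + Rabs (usx xi si) + Rabs (uss xi si).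

Lemma taylor_remainder_dyn3 ij : In ij ((1, 1)%Z :: stencil D) ->
  Rabs (u (x + shx D eps ij) (s + shs D eps ij)
        - (u x s + shx D eps ij * ux x s + shs D eps ij * us x s)) <= eps ^ 2 / 2 * S ij.
Proof.
  intro Hin; destruct (shift_dyn3_le k h eps ij ltac:(lra) Hin) as [Hx Hs].
  eapply taylor2_remainder_le; [exact (Hth ij Hin)|exact Hx|exact Hs].
Qed.

Lemma F1_dyn3_le : Rabs (F1 D eps u ux us x s) <= 1 * sum2 D eps uxx uxs usx uss x s th.
Proof.
  assert (Hsum : sum2 D eps uxx uxs usx uss x s th
                 = S (1, 1)%Z + (S (0, 1)%Z + (S (0, 0)%Z + (S (1, 0)%Z + 0))))
    by reflexivity.
  assert (HS00 : 0 <= S (0, 0)%Z)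
    by (unfold S; repeat apply Rplus_le_le_0_compat; apply Rabs_pos).
  assert (R11 := taylor_remainder_dyn3 (1, 1)%Z ltac:(simpl; auto)).
  assert (R01 := taylor_remainder_dyn3 (0, 1)%Z ltac:(simpl; auto)).
  assert (R10 := taylor_remainder_dyn3 (1, 0)%Z ltac:(simpl; auto 6)).
  unfold D in *; rewrite F1_dyn3, Hsum.
  rewrite !shx_dyn3, !shs_dyn3 in R11, R01, R10; simpl IZR in R11, R01, R10.
  rewrite !Rmult_1_l in R11; rewrite Rmult_1_l, !Rmult_0_l, !Rplus_0_r in R01, R10.
  set (r11 := u (x + eps) (s + eps) - _) in R11.
  set (r01 := u x (s + eps) - _) in R01.
  set (r10 := u (x + eps) s - _) in R10.
  replace (u (x + eps) (s + eps)) with (u x s + eps * ux x s + eps * us x s + r11)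
    by (unfold r11; ring).
  replace (u x (s + eps)) with (u x s + eps * us x s + r01) by (unfold r01; ring).
  replace (u (x + eps) s) with (u x s + eps * ux x s + r10) by (unfold r10; ring).
  pose proof (HF1 eps (u x s) (ux x s) (us x s) r11 r01 r10 _ _ _ Heps Hpos R11 R01 R10).
  lra.
Qed.

End F1Estimate.

Lemma PDE2inf_data_dyn3 k h (G : pde1) :
  (forall a b c, 0 < a -> 0 < b -> 0 < c -> 0 < peval h [a; b; c]) ->
  (forall eps u0 ux us, 0 < eps -> induced_P (dyn3 k h) eps u0 ux us = eps * G eps u0 ux us) ->
  (forall eps u0 ux us r11 r01 r10 S11 S01 S10, 0 < eps < 1 -> 0 < u0 ->
     Rabs r11 <= eps ^ 2 / 2 * S11 -> Rabs r01 <= eps ^ 2 / 2 * S01 ->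
     Rabs r10 <= eps ^ 2 / 2 * S10 ->
     Rabs (F1_grid k h eps u0 ux us (u0 + eps * ux + eps * us + r11)
             (u0 + eps * us + r01) (u0 + eps * ux + r10)) <= S11 + S01 + S10) ->
  PDE2inf_data (dyn3 k h) G.
Proof.
  intros Hh HP HF1; split; [|split].
  - intros z Hlen Hpos; rewrite nargs_dyn3 in Hlen.
    destruct (positive_triple z Hlen Hpos) as (a & b & c & -> & Ha & Hb & Hc).
    apply Hh; assumption.
  - exists (fun eps => eps); intros eps Heps; split; [lra|].
    intros; apply HP; lra.
  - exists 1; split; [lra|].
    intros eps Heps u ux us uxx uxs usx uss _ Hpos x s th Hth.
    apply F1_dyn3_le; [exact Heps|apply Hpos|intros ij Hin; apply Hth, Hin|exact HF1].
Qed.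

(* f = (c + a b / 2 + b^2 / 2) / (1 + b / 2) in the arguments (a, b, c) of [dyn3]. *)
Definition kv : Defs.poly := [(1, [0; 0; 1]%nat); (/ 2, [1; 1; 0]%nat); (/ 2, [0; 2; 0]%nat)].
Definition hv : Defs.poly := [(1, [0; 0; 0]%nat); (/ 2, [0; 1; 0]%nat)].
Definition Dv : dyn := dyn3 kv hv.

(* f = (2 c + b^2 / 2) / (2 + b / 2). *)
Definition ku : Defs.poly := [(2, [0; 0; 1]%nat); (/ 2, [0; 2; 0]%nat)].
Definition hu : Defs.poly := [(2, [0; 0; 0]%nat); (/ 2, [0; 1; 0]%nat)].
Definition Du : dyn := dyn3 ku hu.

Lemma induced_P_Dv eps u0 ux us :
  0 < eps -> induced_P Dv eps u0 ux us = eps * Gv eps u0 ux us.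
Proof.
  intro Heps; unfold induced_P, tay, Dv; rewrite stencil_dyn3; simpl.
  unfold Gv; field; lra.
Qed.

Lemma induced_P_Du eps u0 ux us :
  0 < eps -> induced_P Du eps u0 ux us = eps * Gu eps u0 ux us.
Proof.
  intro Heps; unfold induced_P, tay, Du; rewrite stencil_dyn3; simpl.
  unfold Gu; field; lra.
Qed.

Lemma F1_grid_Dv eps u0 ux us r11 r01 r10 : 0 < eps -> 0 < u0 ->
  F1_grid kv hv eps u0 ux us (u0 + eps * ux + eps * us + r11)
    (u0 + eps * us + r01) (u0 + eps * ux + r10)
  = ((1 + eps * u0 / 2) * r11 + (- (eps * u0 / 2)) * r01 + (-1) * r10)
    / (eps * (1 + eps * u0 / 2)).
Proof.
  intros Heps Hu0; unfold F1_grid; rewrite induced_P_Dv by exact Heps.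
  unfold peval, mon, Gv; simpl; field; nra.
Qed.

Lemma F1_grid_Du eps u0 ux us r11 r01 r10 : 0 < eps -> 0 < u0 ->
  F1_grid ku hu eps u0 ux us (u0 + eps * ux + eps * us + r11)
    (u0 + eps * us + r01) (u0 + eps * ux + r10)
  = ((2 + eps * u0 / 2) * r11 + 0 * r01 + (-2) * r10) / (eps * (2 + eps * u0 / 2)).
Proof.
  intros Heps Hu0; unfold F1_grid; rewrite induced_P_Du by exact Heps.
  unfold peval, mon, Gu; simpl; field; nra.
Qed.

Lemma PDE2inf_data_Dv : PDE2inf_data Dv Gv.
Proof.
  apply PDE2inf_data_dyn3.
  - intros a b c _ Hb _; unfold peval, mon; simpl; lra.
  - intros; apply induced_P_Dv; assumption.
  - intros eps u0 ux us r11 r01 r10 S11 S01 S10 Heps Hu0 H11 H01 H10.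
    rewrite F1_grid_Dv by lra.
    assert (0 <= eps * u0 / 2) by nra.
    apply Rabs_weighted_residuals_le; try assumption; try apply Rabs_le; lra.
Qed.

Lemma PDE2inf_data_Du : PDE2inf_data Du Gu.
Proof.
  apply PDE2inf_data_dyn3.
  - intros a b c _ Hb _; unfold peval, mon; simpl; lra.
  - intros; apply induced_P_Du; assumption.
  - intros eps u0 ux us r11 r01 r10 S11 S01 S10 Heps Hu0 H11 H01 H10.
    rewrite F1_grid_Du by lra.
    assert (0 <= eps * u0 / 2) by nra.
    apply Rabs_weighted_residuals_le; try assumption; try apply Rabs_le; lra.
Qed.

Lemma Rabs_le_bounds a d : Rabs a <= d -> - d <= a <= d.
Proof.
  intro H; pose proof (Rle_abs a); pose proof (Rle_abs (- a)).
  rewrite Rabs_Ropp in *; lra.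
Qed.

Lemma supdist3_bounds x1 x2 x3 y1 y2 y3 :
  let d := supdist [x1; x2; x3] [y1; y2; y3] in
  - d <= x1 - y1 <= d /\ - d <= x2 - y2 <= d /\ - d <= x3 - y3 <= d.
Proof.
  unfold supdist; simpl.
  pose proof (Rmax_l (Rabs (x3 - y3)) 0).
  pose proof (Rmax_l (Rabs (x2 - y2)) (Rmax (Rabs (x3 - y3)) 0)).
  pose proof (Rmax_r (Rabs (x2 - y2)) (Rmax (Rabs (x3 - y3)) 0)).
  pose proof (Rmax_l (Rabs (x1 - y1)) (Rmax (Rabs (x2 - y2)) (Rmax (Rabs (x3 - y3)) 0))).
  pose proof (Rmax_r (Rabs (x1 - y1)) (Rmax (Rabs (x2 - y2)) (Rmax (Rabs (x3 - y3)) 0))).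
  split; [|split]; apply Rabs_le_bounds; lra.
Qed.

Lemma approx_data_dyn3 k h t num den M c :
  0 < t -> num <> [] -> den <> [] ->
  Forall (fun cc => length (snd cc) = 3%nat) num ->
  Forall (fun cc => length (snd cc) = 3%nat) den ->
  (forall a b c, 0 < a -> 0 < b -> 0 < c ->
     peval k [a; b; c] / peval h [a; b; c] = relsum t num [a; b; c] / relsum t den [a; b; c]) ->
  INR (length num * length den) <= M ->
  (forall x1 x2 x3 y1 y2 y3,
     Rabs (phi num den [x1; x2; x3] - phi num den [y1; y2; y3])
     <= c * supdist [x1; x2; x3] [y1; y2; y3]) ->
  approx_data (dyn3 k h) M c 1 2 1.
Proof.
  intros Ht Hnum Hden Hlnum Hlden Hf HM Hphi.
  exists t, num, den; rewrite nargs_dyn3.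
  repeat split; try assumption.
  - intros z Hlen Hpos.
    destruct (positive_triple z Hlen Hpos) as (a & b & c' & -> & Ha & Hb & Hc).
    apply Hf; assumption.
  - intros x y Hx Hy.
    destruct x as [|x1 [|x2 [|x3 [|]]]]; try discriminate.
    destruct y as [|y1 [|y2 [|y3 [|]]]]; try discriminate.
    apply Hphi.
  - apply leb_complete; reflexivity.
  - apply leb_complete; reflexivity.
  - discriminate.
Qed.

Lemma Rpower_2_m1 : Rpower 2 (-1) = / 2.
Proof. replace (-1) with (- (1)) by ring. rewrite Rpower_Ropp, Rpower_1; lra. Qed.

(* With t = 2 the coefficient 1/2 becomes t^(-1). *)
Lemma approx_data_Dv : approx_data Dv 20 2 1 2 1.
Proof.
  apply (approx_data_dyn3 _ _ 2
           [(0, [0; 0; 1]%Z); (-1, [1; 1; 0]%Z); (-1, [0; 2; 0]%Z)]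
           [(0, [0; 0; 0]%Z); (-1, [0; 1; 0]%Z)]);
    try lra; try discriminate.
  - repeat constructor.
  - repeat constructor.
  - intros a b c Ha Hb Hc; unfold relsum, peval, mon, lmon; simpl.
    rewrite Rpower_2_m1, Rpower_O by lra. field; lra.
  - simpl; lra.
  - intros x1 x2 x3 y1 y2 y3.
    pose proof (supdist3_bounds x1 x2 x3 y1 y2 y3) as Hd; simpl in Hd.
    revert Hd; generalize (supdist [x1; x2; x3] [y1; y2; y3]); intros d Hd.
    unfold phi, tropmax, dotZ; simpl.
    apply Rabs_le; unfold Rmax; repeat destruct Rle_dec; split; lra.
Qed.

Lemma approx_data_Du : approx_data Du 20 2 1 2 1.
Proof.
  apply (approx_data_dyn3 _ _ 2
           [(1, [0; 0; 1]%Z); (-1, [0; 2; 0]%Z)]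
           [(1, [0; 0; 0]%Z); (-1, [0; 1; 0]%Z)]);
    try lra; try discriminate.
  - repeat constructor.
  - repeat constructor.
  - intros a b c Ha Hb Hc; unfold relsum, peval, mon, lmon; simpl.
    rewrite Rpower_2_m1, Rpower_1 by lra. field; lra.
  - simpl; lra.
  - intros x1 x2 x3 y1 y2 y3.
    pose proof (supdist3_bounds x1 x2 x3 y1 y2 y3) as Hd; simpl in Hd.
    revert Hd; generalize (supdist [x1; x2; x3] [y1; y2; y3]); intros d Hd.
    unfold phi, tropmax, dotZ; simpl.
    apply Rabs_le; unfold Rmax; repeat destruct Rle_dec; split; lra.
Qed.

Definition rate (a b : R) : R := Rmax (a / b) (b / a).

Lemma ratio_rate u v x s : ratio u v x s = rate (u x s) (v x s).
Proof. reflexivity. Qed.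

Lemma rate_sym a b : rate a b = rate b a.
Proof. apply Rmax_comm. Qed.

Lemma rate_leP a b Q : 0 < a -> 0 < b -> rate a b <= Q <-> a <= Q * b /\ b <= Q * a.
Proof.
  intros Ha Hb; unfold rate; split.
  - intro H; pose proof (Rmax_l (a / b) (b / a)); pose proof (Rmax_r (a / b) (b / a)).
    split.
    + apply (Rmult_le_reg_r (/ b)); [apply Rinv_0_lt_compat; lra|].
      rewrite Rmult_assoc, Rinv_r by lra; fold (a / b); lra.
    + apply (Rmult_le_reg_r (/ a)); [apply Rinv_0_lt_compat; lra|].
      rewrite Rmult_assoc, Rinv_r by lra; fold (b / a); lra.
  - intros [H1 H2]; apply Rmax_lub.
    + apply (Rmult_le_reg_r b); [lra|]. unfold Rdiv; rewrite Rmult_assoc, Rinv_l; lra.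
    + apply (Rmult_le_reg_r a); [lra|]. unfold Rdiv; rewrite Rmult_assoc, Rinv_l; lra.
Qed.

Lemma rate_ge_1 a b : 0 < a -> 0 < b -> 1 <= rate a b.
Proof.
  intros Ha Hb; unfold rate; destruct (Rle_dec a b).
  - eapply Rle_trans; [|apply Rmax_r]. apply (Rmult_le_reg_r a); [lra|].
    unfold Rdiv; rewrite Rmult_assoc, Rinv_l; lra.
  - eapply Rle_trans; [|apply Rmax_l]. apply (Rmult_le_reg_r b); [lra|].
    unfold Rdiv; rewrite Rmult_assoc, Rinv_l; lra.
Qed.

Lemma rate_trans a b c P Q : 0 < a -> 0 < b -> 0 < c ->
  rate a b <= P -> rate b c <= Q -> rate a c <= P * Q.
Proof.
  intros Ha Hb Hc HP HQ.
  apply rate_leP in HP as [H1 H2]; apply rate_leP in HQ as [H3 H4]; try assumption.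
  apply rate_leP; [assumption|assumption|split; nra].
Qed.

Lemma rate_mul a b c d P Q : 0 < a -> 0 < b -> 0 < c -> 0 < d ->
  rate a b <= P -> rate c d <= Q -> rate (a * c) (b * d) <= P * Q.
Proof.
  intros Ha Hb Hc Hd HP HQ.
  apply rate_leP in HP as [H1 H2]; apply rate_leP in HQ as [H3 H4]; try assumption.
  apply rate_leP; [nra|nra|split; nra].
Qed.

Lemma rate_add a b c d Q : 0 < a -> 0 < b -> 0 < c -> 0 < d ->
  rate a b <= Q -> rate c d <= Q -> rate (a + c) (b + d) <= Q.
Proof.
  intros Ha Hb Hc Hd HP HQ.
  apply rate_leP in HP as [H1 H2]; apply rate_leP in HQ as [H3 H4]; try assumption.
  apply rate_leP; [lra|lra|split; lra].
Qed.

Lemma rate_inv a b : rate (/ a) (/ b) = rate a b.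
Proof.
  unfold rate, Rdiv; rewrite !Rinv_inv, Rmax_comm; f_equal; apply Rmult_comm.
Qed.

Lemma rate_le_2_of_close X N : 0 < X -> 0 < N -> Rabs (X - N) <= X / 3 + N / 3 -> rate X N <= 2.
Proof.
  intros HX HN H; apply Rabs_le_bounds in H.
  apply rate_leP; [assumption|assumption|split; lra].
Qed.

(* With a_ij = w(x0 + i eps, s0 + j eps) for a solution w, the difference of the two
   sides is eps Gv plus the Taylor errors weighted by exactly the coefficients of a11, a10,
   a01 in the two sides, so errors below a third of the values cost a factor at most 2. *)
Lemma Gv_grid_rate eps a00 a10 a01 a11 p q :
  0 < eps -> 0 < a00 -> 0 < a10 -> 0 < a01 -> 0 < a11 -> Gv eps a00 p q = 0 ->
  Rabs (a10 - a00 - eps * p) <= a10 / 3 -> Rabs (a01 - a00 - eps * q) <= a01 / 3 ->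
  Rabs (a11 - a00 - eps * p - eps * q) <= a11 / 3 ->
  rate (a11 * (1 + eps * a00)) (a10 + eps / 2 * a00 * a10 + eps * a00 * a01) <= 2.
Proof.
  intros Heps H00 H10 H01 H11 HG R10 R01 R11.
  assert (0 < eps * a00) by nra.
  assert (0 < eps * a00 * a10) by nra. assert (0 < eps * a00 * a01) by nra.
  apply rate_le_2_of_close; [nra|nra|].
  replace (a11 * (1 + eps * a00) - (a10 + eps / 2 * a00 * a10 + eps * a00 * a01))
    with ((1 + eps * a00) * (a11 - a00 - eps * p - eps * q)
          + (- (1 + eps * a00 / 2)) * (a10 - a00 - eps * p)
          + (- (eps * a00)) * (a01 - a00 - eps * q) + eps * Gv eps a00 p q)
    by (unfold Gv; field).
  rewrite HG, Rmult_0_r, Rplus_0_r.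
  eapply Rle_trans; [apply Rabs_lincomb3_le|].
  rewrite !Rabs_Ropp, (Rabs_pos_eq (1 + _)), (Rabs_pos_eq (1 + _ / 2)),
    (Rabs_pos_eq (eps * a00)) by lra.
  assert ((1 + eps * a00) * Rabs (a11 - a00 - eps * p - eps * q) <= (1 + eps * a00) * (a11 / 3))
    by (apply Rmult_le_compat_l; lra).
  assert ((1 + eps * a00 / 2) * Rabs (a10 - a00 - eps * p) <= (1 + eps * a00 / 2) * (a10 / 3))
    by (apply Rmult_le_compat_l; lra).
  assert (eps * a00 * Rabs (a01 - a00 - eps * q) <= eps * a00 * (a01 / 3))
    by (apply Rmult_le_compat_l; lra).
  lra.
Qed.

Lemma Gu_grid_rate eps a00 a10 a01 a11 p q :
  0 < eps -> 0 < a00 -> 0 < a10 -> 0 < a01 -> 0 < a11 -> Gu eps a00 p q = 0 ->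
  Rabs (a10 - a00 - eps * p) <= a10 / 3 -> Rabs (a01 - a00 - eps * q) <= a01 / 3 ->
  Rabs (a11 - a00 - eps * p - eps * q) <= a11 / 3 ->
  rate (a11 * (2 + eps * a00)) (2 * a10 + eps / 2 * a00 * a10 + eps / 2 * a00 * a01) <= 2.
Proof.
  intros Heps H00 H10 H01 H11 HG R10 R01 R11.
  assert (0 < eps * a00) by nra.
  assert (0 < eps * a00 * a10) by nra. assert (0 < eps * a00 * a01) by nra.
  apply rate_le_2_of_close; [nra|nra|].
  replace (a11 * (2 + eps * a00) - (2 * a10 + eps / 2 * a00 * a10 + eps / 2 * a00 * a01))
    with ((2 + eps * a00) * (a11 - a00 - eps * p - eps * q)
          + (- (2 + eps * a00 / 2)) * (a10 - a00 - eps * p)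
          + (- (eps * a00 / 2)) * (a01 - a00 - eps * q) + eps * Gu eps a00 p q)
    by (unfold Gu; field).
  rewrite HG, Rmult_0_r, Rplus_0_r.
  eapply Rle_trans; [apply Rabs_lincomb3_le|].
  rewrite !Rabs_Ropp, (Rabs_pos_eq (2 + _)), (Rabs_pos_eq (2 + _ / 2)),
    (Rabs_pos_eq (eps * a00 / 2)) by lra.
  assert ((2 + eps * a00) * Rabs (a11 - a00 - eps * p - eps * q) <= (2 + eps * a00) * (a11 / 3))
    by (apply Rmult_le_compat_l; lra).
  assert ((2 + eps * a00 / 2) * Rabs (a10 - a00 - eps * p) <= (2 + eps * a00 / 2) * (a10 / 3))
    by (apply Rmult_le_compat_l; lra).
  assert (eps * a00 / 2 * Rabs (a01 - a00 - eps * q) <= eps * a00 / 2 * (a01 / 3))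
    by (apply Rmult_le_compat_l; lra).
  lra.
Qed.

Ltac positivity :=
  unfold Rdiv; repeat (apply Rplus_lt_0_compat || apply Rmult_lt_0_compat
                       || apply Rinv_0_lt_compat); lra.

Lemma rate_grid_step eps a00 a10 a01 a11 b00 b10 b01 b11 r :
  0 < eps -> 0 < a00 -> 0 < a10 -> 0 < a01 -> 0 < a11 ->
  0 < b00 -> 0 < b10 -> 0 < b01 -> 0 < b11 -> 1 <= r ->
  rate a00 b00 <= r -> rate a10 b10 <= r -> rate a01 b01 <= r ->
  rate (a11 * (1 + eps * a00)) (a10 + eps / 2 * a00 * a10 + eps * a00 * a01) <= 2 ->
  rate (b11 * (2 + eps * b00)) (2 * b10 + eps / 2 * b00 * b10 + eps / 2 * b00 * b01) <= 2 ->
  rate a11 b11 <= 16 * r ^ 3.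
Proof.
  intros Heps Ha00 Ha10 Ha01 Ha11 Hb00 Hb10 Hb01 Hb11 Hr R00 R10 R01 Ha Hb.
  assert (Hr2 : r <= r * r) by nra.
  assert (Hconst : forall c d Q, 0 < c -> 0 < d -> c <= Q * d -> d <= Q * c -> rate c d <= Q)
    by (intros; apply rate_leP; auto).
  assert (Hden : rate (1 + eps * a00) (2 + eps * b00) <= 2 * r).
  { apply rate_add; [positivity..| apply Hconst; lra |].
    assert (rate (eps * a00) (eps * b00) <= 1 * r)
      by (apply rate_mul; [positivity..|apply Hconst; lra|exact R00]).
    lra. }
  assert (Hnum : rate (a10 + eps / 2 * a00 * a10 + eps * a00 * a01)
                      (2 * b10 + eps / 2 * b00 * b10 + eps / 2 * b00 * b01) <= 2 * (r * r)).
  { apply rate_add; [positivity..| apply rate_add; [positivity..| |] |].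
    - assert (rate (1 * a10) (2 * b10) <= 2 * r)
        by (apply rate_mul; [positivity..|apply Hconst; lra|exact R10]).
      rewrite Rmult_1_l in *; lra.
    - assert (rate (eps / 2 * a00 * a10) (eps / 2 * b00 * b10) <= 1 * r * r).
      { apply rate_mul; [positivity..| |exact R10].
        apply rate_mul; [positivity..|apply Hconst; lra|exact R00]. }
      lra.
    - replace (2 * (r * r)) with (2 * r * r) by ring.
      apply rate_mul; [positivity..| |exact R01].
      apply rate_mul; [positivity..|apply Hconst; lra|exact R00]. }
  assert (Hprod : rate (a11 * (1 + eps * a00)) (b11 * (2 + eps * b00)) <= 2 * (2 * (r * r)) * 2).
  { apply (rate_trans _ (2 * b10 + eps / 2 * b00 * b10 + eps / 2 * b00 * b01));
      [positivity..| |rewrite rate_sym; exact Hb].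
    apply (rate_trans _ (a10 + eps / 2 * a00 * a10 + eps * a00 * a01));
      [positivity..|exact Ha|exact Hnum]. }
  replace a11 with (a11 * (1 + eps * a00) * / (1 + eps * a00)) by (field; apply Rgt_not_eq; positivity).
  replace b11 with (b11 * (2 + eps * b00) * / (2 + eps * b00)) by (field; apply Rgt_not_eq; positivity).
  replace (16 * r ^ 3) with (2 * (2 * (r * r)) * 2 * (2 * r)) by ring.
  apply rate_mul; try positivity.
  rewrite rate_inv; exact Hden.
Qed.

Lemma derivable_pt_lim_pderx T0 f g x s : pderx (dom T0) f g -> dom T0 x s ->
  derivable_pt_lim (fun t => f t s) x (g x s).
Proof.
  intros H Hd e He; destruct (H x s Hd e He) as (del & Hdel & Hh).
  destruct Hd as (Hx & Hs & HT).
  assert (Hpos : 0 < Rmin del x) by (apply Rmin_glb_lt; lra).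
  exists (mkposreal _ Hpos); intros h Hh0 Hhlt; simpl in Hhlt.
  pose proof (Rmin_l del x); pose proof (Rmin_r del x).
  pose proof (Rabs_def2 _ _ Hhlt).
  apply Hh; [exact Hh0|lra|repeat split; auto; lra].
Qed.

Lemma derivable_pt_lim_pders T0 f g x s : pders (dom T0) f g -> dom T0 x s -> 0 < s ->
  derivable_pt_lim (fun t => f x t) s (g x s).
Proof.
  intros H Hd Hs0 e He; destruct (H x s Hd e He) as (del & Hdel & Hh).
  destruct Hd as (Hx & Hs & HT).
  set (gap := match T0 with Some T => T - s | None => 1 end).
  assert (Hgap : 0 < gap) by (unfold gap; destruct T0; lra).
  assert (Hpos : 0 < Rmin del (Rmin s gap)) by (repeat apply Rmin_glb_lt; lra).
  exists (mkposreal _ Hpos); intros h Hh0 Hhlt; simpl in Hhlt.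
  pose proof (Rmin_l del (Rmin s gap)); pose proof (Rmin_r del (Rmin s gap)).
  pose proof (Rmin_l s gap); pose proof (Rmin_r s gap).
  pose proof (Rabs_def2 _ _ Hhlt).
  apply Hh; [exact Hh0|lra|].
  repeat split; [lra|lra|]. unfold gap in *; destruct T0; [lra|exact I].
Qed.

Lemma taylor1_remainder_le (f f' f'' : R -> R) a b : a < b ->
  (forall c, a <= c <= b -> derivable_pt_lim f c (f' c)) ->
  (forall c, a <= c <= b -> derivable_pt_lim f' c (f'' c)) ->
  exists c, a <= c <= b /\ Rabs (f b - f a - (b - a) * f' a) <= (b - a) ^ 2 * Rabs (f'' c).
Proof.
  intros Hab H1 H2.
  destruct (MVT_cor2 f f' a b Hab H1) as (c1 & E1 & Hc1).
  destruct (MVT_cor2 f' f'' a c1 (proj1 Hc1)) as (c2 & E2 & Hc2).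
  { intros c Hc; apply H2; lra. }
  exists c2; split; [lra|].
  replace (f b - f a - (b - a) * f' a) with ((b - a) * (c1 - a) * f'' c2) by nra.
  rewrite !Rabs_mult, (Rabs_pos_eq (b - a)), (Rabs_pos_eq (c1 - a)) by lra.
  apply Rmult_le_compat_r; [apply Rabs_pos|]. simpl; nra.
Qed.

Lemma dom_box T0 x0 s0 e x s : 0 < x0 -> 0 < s0 -> dom T0 (x0 + e) (s0 + e) ->
  x0 <= x <= x0 + e -> s0 <= s <= s0 + e -> dom T0 x s.
Proof.
  intros Hx Hs (_ & _ & HT) Hxx Hss; repeat split; [lra|lra|].
  destruct T0; [lra|exact I].
Qed.

Lemma Rabs_le_max2nd (uxx uxs usx uss : R -> R -> R) x s :
  Rabs (uxx x s) <= max2nd uxx uxs usx uss x s /\ Rabs (usx x s) <= max2nd uxx uxs usx uss x s /\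
  Rabs (uss x s) <= max2nd uxx uxs usx uss x s.
Proof.
  unfold max2nd.
  pose proof (Rmax_l (Rabs (uxx x s)) (Rabs (uxs x s))).
  pose proof (Rmax_l (Rabs (usx x s)) (Rabs (uss x s))).
  pose proof (Rmax_r (Rabs (usx x s)) (Rabs (uss x s))).
  pose proof (Rmax_l (Rmax (Rabs (uxx x s)) (Rabs (uxs x s))) (Rmax (Rabs (usx x s)) (Rabs (uss x s)))).
  pose proof (Rmax_r (Rmax (Rabs (uxx x s)) (Rabs (uxs x s))) (Rmax (Rabs (usx x s)) (Rabs (uss x s)))).
  lra.
Qed.

Section GridTaylor.

Variables (T0 : option R) (u ux us uxx uxs usx uss : R -> R -> R) (e x0 s0 : R).
Hypotheses (Hux : pderx (dom T0) u ux) (Hus : pders (dom T0) u us)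
  (Huxx : pderx (dom T0) ux uxx) (Husx : pderx (dom T0) us usx) (Huss : pders (dom T0) us uss).
Hypotheses (He : 0 < e < 1) (Hx0 : 0 < x0) (Hs0 : 0 < s0) (Hbox : dom T0 (x0 + e) (s0 + e)).
Hypothesis Hsmall : forall x s y r, dom T0 x s -> dom T0 y r ->
  10 * e * max2nd uxx uxs usx uss x s <= u y r.

Let in_box x s : x0 <= x <= x0 + e -> s0 <= s <= s0 + e -> dom T0 x s :=
  dom_box T0 x0 s0 e x s Hx0 Hs0 Hbox.

Lemma second_derivs_small x s y r : dom T0 x s -> dom T0 y r ->
  e ^ 2 * Rabs (uxx x s) <= u y r / 10 /\ e ^ 2 * Rabs (usx x s) <= u y r / 10 /\
  e ^ 2 * Rabs (uss x s) <= u y r / 10.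
Proof.
  intros Hxs Hyr; pose proof (Hsmall x s y r Hxs Hyr) as H.
  destruct (Rabs_le_max2nd uxx uxs usx uss x s) as (H1 & H2 & H3).
  assert (Hm : 0 <= max2nd uxx uxs usx uss x s) by (pose proof (Rabs_pos (uxx x s)); lra).
  assert (Hsq : e ^ 2 * max2nd uxx uxs usx uss x s <= u y r / 10).
  { replace (e ^ 2 * max2nd uxx uxs usx uss x s)
      with (e / 10 * (10 * e * max2nd uxx uxs usx uss x s)) by (simpl; field).
    assert (0 <= u y r) by nra. nra. }
  assert (Hmono : forall F, Rabs F <= max2nd uxx uxs usx uss x s ->
                  e ^ 2 * Rabs F <= u y r / 10).
  { intros F HF; assert (0 < e ^ 2) by (simpl; nra).
    eapply Rle_trans; [apply Rmult_le_compat_l; [lra|exact HF]|exact Hsq]. }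
  auto.
Qed.

Lemma taylor_x_step : Rabs (u (x0 + e) s0 - u x0 s0 - e * ux x0 s0) <= u (x0 + e) s0 / 3.
Proof.
  destruct (taylor1_remainder_le (fun t => u t s0) (fun t => ux t s0) (fun t => uxx t s0)
              x0 (x0 + e)) as (c & Hc & B); [lra| | |].
  1, 2: intros c Hc; eapply derivable_pt_lim_pderx; eauto; apply in_box; lra.
  replace (x0 + e - x0) with e in B by ring; cbv beta in B.
  assert (Hend : dom T0 (x0 + e) s0) by (apply in_box; lra).
  destruct (second_derivs_small c s0 _ _ ltac:(apply in_box; lra) Hend) as (H & _).
  assert (0 <= u (x0 + e) s0) by (pose proof (Rabs_pos (uxx c s0)); nra).
  lra.
Qed.

Lemma taylor_s_step : Rabs (u x0 (s0 + e) - u x0 s0 - e * us x0 s0) <= u x0 (s0 + e) / 3.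
Proof.
  destruct (taylor1_remainder_le (fun t => u x0 t) (fun t => us x0 t) (fun t => uss x0 t)
              s0 (s0 + e)) as (c & Hc & B); [lra| | |].
  1, 2: intros c Hc; eapply derivable_pt_lim_pders; eauto; [apply in_box|]; lra.
  replace (s0 + e - s0) with e in B by ring; cbv beta in B.
  assert (Hend : dom T0 x0 (s0 + e)) by (apply in_box; lra).
  destruct (second_derivs_small x0 c _ _ ltac:(apply in_box; lra) Hend) as (_ & _ & H).
  assert (0 <= u x0 (s0 + e)) by (pose proof (Rabs_pos (uss x0 c)); nra).
  lra.
Qed.

(* Split the diagonal step through (x0 + e, s0): a Taylor step in s at x0 + e, the
   drift e (us (x0 + e) s0 - us x0 s0) by the mean value theorem, and a Taylor step in x. *)
Lemma taylor_diag_step :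
  Rabs (u (x0 + e) (s0 + e) - u x0 s0 - e * ux x0 s0 - e * us x0 s0) <= u (x0 + e) (s0 + e) / 3.
Proof.
  set (x1 := x0 + e).
  assert (Hend : dom T0 x1 (s0 + e)) by (apply in_box; unfold x1; lra).
  destruct (taylor1_remainder_le (fun t => u x1 t) (fun t => us x1 t) (fun t => uss x1 t)
              s0 (s0 + e)) as (c1 & Hc1 & B1); [lra| | |].
  1, 2: intros c Hc; eapply derivable_pt_lim_pders; eauto; [apply in_box|]; unfold x1; lra.
  destruct (MVT_cor2 (fun t => us t s0) (fun t => usx t s0) x0 x1) as (c2 & B2 & Hc2);
    [unfold x1; lra| |].
  { intros c Hc; eapply derivable_pt_lim_pderx; eauto; apply in_box; unfold x1 in *; lra. }
  destruct (taylor1_remainder_le (fun t => u t s0) (fun t => ux t s0) (fun t => uxx t s0)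
              x0 x1) as (c3 & Hc3 & B3); [unfold x1; lra| | |].
  1, 2: intros c Hc; eapply derivable_pt_lim_pderx; eauto; apply in_box; unfold x1 in *; lra.
  cbv beta in B1, B2, B3.
  replace (s0 + e - s0) with e in B1 by ring.
  replace (x1 - x0) with e in B2, B3 by (unfold x1; ring).
  destruct (second_derivs_small x1 c1 _ _ ltac:(apply in_box; unfold x1; lra) Hend)
    as (_ & _ & H1).
  destruct (second_derivs_small c2 s0 _ _ ltac:(apply in_box; unfold x1 in *; lra) Hend)
    as (_ & H2 & _).
  destruct (second_derivs_small c3 s0 _ _ ltac:(apply in_box; unfold x1 in *; lra) Hend)
    as (H3 & _).
  assert (0 <= u x1 (s0 + e)) by (pose proof (Rabs_pos (uss x1 c1)); nra).
  replace (u x1 (s0 + e) - u x0 s0 - e * ux x0 s0 - e * us x0 s0) with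
    ((u x1 (s0 + e) - u x1 s0 - e * us x1 s0) + e * (us x1 s0 - us x0 s0)
     + (u x1 s0 - u x0 s0 - e * ux x0 s0)) by ring.
  rewrite B2.
  assert (Rabs (e * (usx c2 s0 * e)) = e ^ 2 * Rabs (usx c2 s0)).
  { rewrite !Rabs_mult, (Rabs_pos_eq e) by lra; simpl; ring. }
  pose proof (Rabs_triang ((u x1 (s0 + e) - u x1 s0 - e * us x1 s0) + e * (usx c2 s0 * e))
                (u x1 s0 - u x0 s0 - e * ux x0 s0)).
  pose proof (Rabs_triang (u x1 (s0 + e) - u x1 s0 - e * us x1 s0) (e * (usx c2 s0 * e))).
  lra.
Qed.

End GridTaylor.

Definition dexp4 (b y : R) : R := Rpower b (Rpower 4 y).

Lemma dexp4_ge_base b y : 1 <= b -> 0 <= y -> b <= dexp4 b y.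
Proof.
  intros Hb Hy; unfold dexp4; rewrite <- (Rpower_1 b) at 1 by lra.
  apply Rle_Rpower; [lra|]. rewrite <- (Rpower_O 4) by lra. apply Rle_Rpower; lra.
Qed.

Lemma dexp4_le b y y' : 1 <= b -> y <= y' -> dexp4 b y <= dexp4 b y'.
Proof. intros Hb Hy; unfold dexp4; apply Rle_Rpower; [lra|]. apply Rle_Rpower; lra. Qed.

Lemma dexp4_pred b y : 0 < b -> dexp4 b y = dexp4 b (y - 1) ^ 4.
Proof.
  intro Hb; unfold dexp4.
  replace y with (1 + (y - 1)) at 1 by ring.
  rewrite Rpower_plus, Rpower_1 by lra.
  rewrite <- Rpower_pow by apply exp_pos.
  rewrite Rpower_mult; f_equal; simpl; ring.
Qed.

Lemma initial_rate_ge_1 T0 eps (u v : R -> R -> R) R0 : T0_ok T0 -> 0 < eps ->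
  (forall x s, dom T0 x s -> 0 < u x s) -> (forall x s, dom T0 x s -> 0 < v x s) ->
  (forall x s, dom T0 x s -> (s <= 2 * eps \/ x <= 2 * eps) -> rate (u x s) (v x s) <= R0) ->
  1 <= R0.
Proof.
  intros HT0 Heps Pu Pv HR0.
  assert (Hd : dom T0 eps 0) by (repeat split; [lra|lra|]; destruct T0; [exact HT0|exact I]).
  eapply Rle_trans; [apply rate_ge_1; [apply Pu|apply Pv]; exact Hd|apply HR0; [exact Hd|lra]].
Qed.

Section Relatedness.

Variables (T0 : option R) (eps : R) (u ux us uxx uxs usx uss v vx vs vxx vxs vsx vss : R -> R -> R).
Hypotheses (HT0 : T0_ok T0) (Heps : 0 < eps < 1)
  (Cu : C2_on (dom T0) u ux us uxx uxs usx uss) (Cv : C2_on (dom T0) v vx vs vxx vxs vsx vss)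
  (Pu : forall x s, dom T0 x s -> 0 < u x s) (Pv : forall x s, dom T0 x s -> 0 < v x s)
  (Su : solves Gv eps (dom T0) u ux us) (Sv : solves Gu eps (dom T0) v vx vs).
Hypotheses
  (Hsmall_u : forall x s y r, dom T0 x s -> dom T0 y r -> 10 * eps * max2nd uxx uxs usx uss x s <= u y r)
  (Hsmall_v : forall x s y r, dom T0 x s -> dom T0 y r -> 10 * eps * max2nd vxx vxs vsx vss x s <= v y r).
Variable R0 : R.
Hypothesis HR0 : forall x s, dom T0 x s -> (s <= 2 * eps \/ x <= 2 * eps) ->
  rate (u x s) (v x s) <= R0.

Lemma rate_grid x0 s0 Q : 0 < x0 -> 0 < s0 -> dom T0 (x0 + eps) (s0 + eps) -> 1 <= Q ->
  rate (u x0 s0) (v x0 s0) <= Q -> rate (u (x0 + eps) s0) (v (x0 + eps) s0) <= Q ->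
  rate (u x0 (s0 + eps)) (v x0 (s0 + eps)) <= Q ->
  rate (u (x0 + eps) (s0 + eps)) (v (x0 + eps) (s0 + eps)) <= 16 * Q ^ 3.
Proof.
  intros Hx0 Hs0 Hbox HQ R00 R10 R01.
  destruct Cu as (Hux & Hus & Huxx & _ & Husx & Huss & _).
  destruct Cv as (Hvx & Hvs & Hvxx & _ & Hvsx & Hvss & _).
  assert (Hin : forall x s, x0 <= x <= x0 + eps -> s0 <= s <= s0 + eps -> dom T0 x s)
    by (intros; eapply (dom_box T0 x0 s0 eps); eauto).
  assert (D00 : dom T0 x0 s0) by (apply Hin; lra).
  assert (D10 : dom T0 (x0 + eps) s0) by (apply Hin; lra).
  assert (D01 : dom T0 x0 (s0 + eps)) by (apply Hin; lra).
  apply (rate_grid_step eps (u x0 s0) (u (x0 + eps) s0) (u x0 (s0 + eps)) _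
           (v x0 s0) (v (x0 + eps) s0) (v x0 (s0 + eps))); auto; try lra.
  - apply (Gv_grid_rate _ _ _ _ _ (ux x0 s0) (us x0 s0)); auto; try lra.
    + eapply taylor_x_step; eauto.
    + eapply taylor_s_step; eauto.
    + eapply taylor_diag_step; eauto.
  - apply (Gu_grid_rate _ _ _ _ _ (vx x0 s0) (vs x0 s0)); auto; try lra.
    + eapply taylor_x_step; eauto.
    + eapply taylor_s_step; eauto.
    + eapply taylor_diag_step; eauto.
Qed.

(* Each grid step at most quadruples the exponent: 16 Q^3 <= Q^4 once Q >= 40 R0 >= 16. *)
Lemma rate_le_dexp4_below n : forall x s, dom T0 x s -> x + s < INR n * eps ->
  rate (u x s) (v x s) <= dexp4 (40 * R0) ((x + s + 1) / eps).
Proof.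
  assert (HR1 : 1 <= R0) by (apply (initial_rate_ge_1 T0 eps u v); auto; lra).
  induction n as [|n IH]; intros x s Hd Hn.
  - destruct Hd as (Hx & Hs & _); simpl in Hn; lra.
  - destruct Hd as (Hx & Hs & HT).
    assert (Hy : 1 <= (x + s + 1) / eps).
    { apply (Rmult_le_reg_r eps); [lra|]. unfold Rdiv; rewrite Rmult_assoc, Rinv_l; lra. }
    destruct (Rle_dec s (2 * eps)) as [Hs2|Hs2]; [|destruct (Rle_dec x (2 * eps)) as [Hx2|Hx2]].
    1, 2: eapply Rle_trans; [apply HR0; [repeat split; auto|auto]|];
          eapply Rle_trans; [|apply dexp4_ge_base]; lra.
    rewrite S_INR in Hn.
    set (Q := dexp4 (40 * R0) ((x + s + 1) / eps - 1)).
    assert (HQ : 40 * R0 <= Q) by (apply dexp4_ge_base; lra).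
    assert (Hpred : forall x' s', dom T0 x' s' -> x' + s' <= x + s - eps ->
                    rate (u x' s') (v x' s') <= Q).
    { intros x' s' Hd' Hle.
      eapply Rle_trans; [apply IH; [exact Hd'|lra]|].
      apply dexp4_le; [lra|].
      apply (Rmult_le_reg_r eps); [lra|].
      replace ((x' + s' + 1) / eps * eps) with (x' + s' + 1) by (field; lra).
      replace (((x + s + 1) / eps - 1) * eps) with (x + s + 1 - eps) by (field; lra).
      lra. }
    assert (Hbox : dom T0 (x - eps + eps) (s - eps + eps))
      by (replace (x - eps + eps) with x by ring; replace (s - eps + eps) with s by ring;
          repeat split; auto).
    assert (Hin : forall x' s', x - eps <= x' <= x -> s - eps <= s' <= s -> dom T0 x' s')
      by (intros; eapply (dom_box _ (x - eps) (s - eps) eps); eauto; lra).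
    pose proof (rate_grid (x - eps) (s - eps) Q ltac:(lra) ltac:(lra) Hbox ltac:(lra)
                  (Hpred (x - eps) (s - eps) ltac:(apply Hin; lra) ltac:(lra))
                  (Hpred (x - eps + eps) (s - eps) ltac:(apply Hin; lra) ltac:(lra))
                  (Hpred (x - eps) (s - eps + eps) ltac:(apply Hin; lra) ltac:(lra))) as Hstep.
    replace (x - eps + eps) with x in Hstep by ring.
    replace (s - eps + eps) with s in Hstep by ring.
    rewrite dexp4_pred by lra; fold Q.
    assert (16 * Q ^ 3 <= Q * Q ^ 3) by (apply Rmult_le_compat_r; [apply pow_le|]; lra).
    simpl in *; lra.
Qed.

End Relatedness.

Lemma related_inf_sym P Q M c D0 L0 : related_inf P Q M c D0 L0 -> related_inf Q P M c D0 L0.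
Proof.
  intros (C & C' & HC & HC' & H); exists C, C'; split; [exact HC|split; [exact HC'|]].
  intros T0 HT0 eps Heps u ux us uxx uxs usx uss v vx vs vxx vxs vsx vss
    Cu Cv Pu Pv Su Sv HL HLT Hsmall R0 HR0 x s Hxs.
  rewrite !ratio_rate, rate_sym, <- ratio_rate.
  apply (H T0 HT0 eps Heps v vx vs vxx vxs vsx vss u ux us uxx uxs usx uss); auto.
  - intros x' s' y r Hxs' Hyr; split; apply Hsmall; assumption.
  - intros x' s' Hxs' Hinit; rewrite ratio_rate, rate_sym; apply HR0; assumption.
Qed.

Lemma related_inf_Gv_Gu : related_inf Gv Gu 40 4 1 2.
Proof.
  exists 5, 2; split; [lra|split; [lra|]].
  intros T0 HT0 eps Heps u ux us uxx uxs usx uss v vx vs vxx vxs vsx vss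
    Cu Cv Pu Pv Su Sv _ _ Hsmall R0 HR0 x s Hxs.
  replace (5 * (INR 2 * eps)) with (10 * eps) in Hsmall by (simpl; ring).
  change (INR 2) with 2 in HR0.
  assert (HR1 : 1 <= R0).
  { apply (initial_rate_ge_1 T0 eps u v); auto; lra. }
  rewrite pow_1, Rpower_mult_distr by lra.
  destruct (INR_archimed eps (x + s)) as [n Hn]; [lra|].
  apply (rate_le_dexp4_below T0 eps u ux us uxx uxs usx uss v vx vs vxx vxs vsx vss
           HT0 Heps Cu Cv Pu Pv Su Sv) with (n := n); auto; try lra.
  - intros x' s' y r Hxs' Hyr; apply Hsmall; assumption.
  - intros x' s' y r Hxs' Hyr; apply Hsmall; assumption.
Qed.

Theorem proposition3p3 :
  PDE2inf Gv /\ PDE2inf Gu /\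
  approximable Gv 20 2 1 2 1 /\ approximable Gu 20 2 1 2 1 /\
  related_inf Gv Gu 40 4 1 2 /\ related_inf Gu Gv 40 4 1 2.
Proof.
  split; [exists Dv; exact PDE2inf_data_Dv|].
  split; [exists Du; exact PDE2inf_data_Du|].
  split; [exists Dv; split; [exact PDE2inf_data_Dv|exact approx_data_Dv]|].
  split; [exists Du; split; [exact PDE2inf_data_Du|exact approx_data_Du]|].
  split; [exact related_inf_Gv_Gu|exact (related_inf_sym _ _ _ _ _ _ related_inf_Gv_Gu)].
Qed.
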